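(* Let $G$ be a group with a conjugation-closed generating set $X$ and $g\in\mathrm{Mon}(X)$. Let $\mathbf u,\mathbf v,\mathbf w\in\mathcal F(G,g,\mathbf I)$ with $\mathbf v\subseteq\mathbf u$ and $\mathbf v\subseteq\mathbf w$. Then $\mathbf u\subseteq\mathbf w$ if and only if $\mathbf v^{-1}\mathbf u\subseteq\mathbf v^{-1}\mathbf w$.
   Context: $\mathrm{Mon}(X)$ is the generated submonoid; $\ell(x)$ is the minimal length of a product of elements of $X$ equal to $x$; $x\le y$ if there is $x'\in\mathrm{Mon}(X)$ with $xx'=y$ and $\ell(x)+\ell(x')=\ell(y)$; $[1,g]=\{x:x\le g\}$. A linear factorization of $h$ is $[x_L\ x_1\cdots x_k\ x_R]$ with entries in $\mathrm{Mon}(X)$, $x_1,\dots,x_k\ne1$, lengths summing to $\ell(h)$, product $h$. A weighted linear factorization of $h$ is a function $\mathbf u\colon[0,1]\to G$, trivial at all but finitely many points, such that with $0<s_1<\dots<s_k<1$ the points of $(0,1)$ where $\mathbf u$ is nontrivial, $[\mathbf u(0)\ \mathbf u(s_1)\cdots\mathbf u(s_k)\ \mathbf u(1)]$ is a linear factorization of $h$. $\mathcal F(G,g,\mathbf I)$ is the set of weighted linear factorizations of all $h\in[1,g]$, ordered by $\mathbf v\subseteq\mathbf u$ iff $\mathbf v(r)\le\mathbf u(r)$ for all $r\in[0,1]$. For functions $\mathbf u,\mathbf v\colon[0,1]\to G$, $(\mathbf u\mathbf v)(r)=\mathbf u(r)\mathbf v(r)$ and $\mathbf v^{-1}(r)=(\mathbf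 v(r))^{-1}$; the relation $\subseteq$ is defined by the same pointwise condition for such functions. *)

From Stdlib Require Import Reals List Sorted ClassicalEpsilon.
Import ListNotations.
Open Scope R_scope.

Record Grp := {
  carrier :> Type;
  gmul : carrier -> carrier -> carrier;
  gone : carrier;
  ginv : carrier -> carrier;
  gmulA : forall x y z, gmul x (gmul y z) = gmul (gmul x y) z;
  gmul1l : forall x, gmul gone x = x;
  gmul1r : forall x, gmul x gone = x;
  gmulVl : forall x, gmul (ginv x) x = gone;
  gmulVr : forall x, gmul x (ginv x) = gone }.

Section Defs.
Variable G : Grp.
Variable X : G -> Prop.

Definition gprod (s : list G) : G := fold_right (gmul G) (gone G) s.

Definition conj_closed : Prop :=
  forall x y : G, X x -> X (gmul G (ginv G y) (gmul G x y)).

Definition generates : Prop :=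
  forall y : G, exists s : list (prod bool (carrier G)),
    Forall (fun p : prod bool (carrier G) => X (snd p)) s /\
    y = gprod (map (fun p : prod bool (carrier G) => if fst p then ginv G (snd p) else snd p) s).

Definition word_of (x : G) (n : nat) : Prop :=
  exists s : list (carrier G), Forall X s /\ length s = n /\ gprod s = x.

Definition Mon (x : G) : Prop := exists n, word_of x n.

(* l(x): minimal length of a product of elements of X equal to x
   (only meaningful for x in Mon(X); arbitrary otherwise) *)
Definition ell (x : G) : nat :=
  epsilon (inhabits 0%nat)
    (fun n => word_of x n /\ forall m, word_of x m -> (n <= m)%nat).

Definition gle (x y : G) : Prop :=
  Mon x /\ exists x', Mon x' /\ gmul G x x' = y /\ (ell x + ell x' = ell y)%nat.

(* [x_L x_1 ... x_k x_R] as a list is a linear factorization of h (the nontriviality of interior entries is imposed in weighted_lf) *)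
Definition linear_factorization (h : G) (s : list G) : Prop :=
  Forall Mon s /\ fold_right plus 0%nat (map ell s) = ell h /\ gprod s = h.

(* weighted linear factorization of h: u : [0,1] -> G (values of u outside
   [0,1] are irrelevant), trivial at all but finitely many points; the points
   0 < s_1 < ... < s_k < 1 of (0,1) where u is nontrivial are listed in pts. *)
Definition weighted_lf (h : G) (u : R -> G) : Prop :=
  exists pts : list R,
    StronglySorted Rlt pts /\
    (forall r, 0 < r < 1 -> (u r <> gone G <-> In r pts)) /\
    (forall r, In r pts -> 0 < r < 1) /\
    linear_factorization h (u 0 :: map u pts ++ [u 1]).

Definition in_F (g : G) (u : R -> G) : Prop :=
  exists h, gle h g /\ weighted_lf h u.

Definition fsub (v u : R -> G) : Prop :=
  forall r, 0 <= r <= 1 -> gle (v r) (u r).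

Definition fmul (u v : R -> G) : R -> G := fun r => gmul G (u r) (v r).
Definition finv (v : R -> G) : R -> G := fun r => ginv G (v r).

End Defs.

(* Since v r <= u r and v r <= w r, both u r and w r are reduced products
   (v r) x with l((v r) x) = l(v r) + l(x).  Left multiplication by (v r)^-1
   strips this common reduced prefix and shifts every length by l(v r), so it
   neither creates nor destroys a reduced factorization u r * y = w r; the
   comparison is made point by point. *)
From Stdlib Require Import Reals List Lia.

Section Prefix.
Variable G : Grp.
Variable X : G -> Prop.

Lemma gprod_app (s t : list G) :
  gprod G (s ++ t) = gmul G (gprod G s) (gprod G t).
Proof.
  induction s as [|x s IH]; simpl.
  - now rewrite gmul1l.
  - unfold gprod in *; simpl. now rewrite IH, gmulA.
Qed.

Lemma Mon_mul (a b : G) : Mon G X a -> Mon G X b -> Mon G X (gmul G a b).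
Proof.
  intros [_ [s [Hs [_ Es]]]] [_ [t [Ht [_ Et]]]].
  exists (length (s ++ t)), (s ++ t).
  repeat split.
  - now apply Forall_app.
  - now rewrite gprod_app, Es, Et.
Qed.

Lemma gmulKl (a x : G) : gmul G (ginv G a) (gmul G a x) = x.
Proof. now rewrite gmulA, gmulVl, gmul1l. Qed.

Lemma gle_lcancel (a b c : G) :
  gle G X a b -> gle G X a c ->
  (gle G X b c <-> gle G X (gmul G (ginv G a) b) (gmul G (ginv G a) c)).
Proof.
  intros [Ha [b' [Hb' [<- Lb]]]] [_ [c' [_ [<- Lc]]]].
  rewrite !gmulKl.
  split; intros [_ [y [Hy [Ey Ly]]]].
  - split; [exact Hb'|].
    exists y. repeat split; [exact Hy| |lia].
    now rewrite <- (gmulKl a c'), <- Ey, <- gmulA, gmulKl.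
  - split; [now apply Mon_mul|].
    exists y. repeat split; [exact Hy| |lia].
    now rewrite <- gmulA, Ey.
Qed.

Lemma fsub_lcancel (u v w : R -> G) :
  fsub G X v u -> fsub G X v w ->
  (fsub G X u w <-> fsub G X (fmul G (finv G v) u) (fmul G (finv G v) w)).
Proof.
  intros Hvu Hvw.
  split; intros Huw r Hr.
  - now apply (gle_lcancel _ _ _ (Hvu r Hr) (Hvw r Hr)), Huw.
  - now apply (gle_lcancel _ _ _ (Hvu r Hr) (Hvw r Hr)), Huw.
Qed.

End Prefix.

Theorem lemma5p7 (G : Grp) (X : G -> Prop)
  (HXconj : conj_closed G X) (HXgen : generates G X)
  (g : G) (Hg : Mon G X g)
  (u v w : R -> G)
  (Hu : in_F G X g u) (Hv : in_F G X g v) (Hw : in_F G X g w)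
  (Hvu : fsub G X v u) (Hvw : fsub G X v w) :
  fsub G X u w <->
  fsub G X (fmul G (finv G v) u) (fmul G (finv G v) w).
Proof.
  (* The equivalence holds for arbitrary X and arbitrary functions v <= u, w. *)
  exact (fsub_lcancel G X u v w Hvu Hvw).
Qed.
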